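(* For a positive integer $m$, consider the two-stage adjustable problem with $n=m$, $\mathbf c=\mathbf 0$, $\mathbf d=\mathbf e$, $\mathbf A=\mathbf 0$, the matrix $\mathbf B\in\mathbb R_+^{m\times m}$ with $B_{ii}=1$ and $B_{ij}=\frac1{\sqrt m}$ for $i\ne j$, and uncertainty set $$\mathcal U=\operatorname{conv}\left(\mathbf 0,\mathbf e_1,\dots,\mathbf e_m,\boldsymbol\nu_1,\dots,\boldsymbol\nu_m\right),\qquad \boldsymbol\nu_i=\tfrac{1}{\sqrt m}(\mathbf e-\mathbf e_i),\ i\in[m].$$ Then $z_{\sf Aff}(\mathbf B)=\Omega(\sqrt m)\cdot z_{\sf AR}(\mathbf B)$, i.e. there are absolute constants $C>0$ and $m_0$ such that $z_{\sf Aff}(\mathbf B)\ge C\sqrt m\,z_{\sf AR}(\mathbf B)$ for all $m\ge m_0$.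
   Context: For data $\mathbf A,\mathbf B\in\mathbb R_+^{m\times n}$, $\mathbf c,\mathbf d\in\mathbb R_+^n$ and a compact convex set $\mathcal U\subseteq\mathbb R^m_+$, the two-stage adjustable robust problem is $$z_{\sf AR}(\mathbf B)=\min_{\mathbf x\in\mathbb R^n_+}\ \mathbf c^T\mathbf x+\max_{\mathbf h\in\mathcal U}\ \min_{\mathbf y(\mathbf h)\in\mathbb R^n_+:\ \mathbf A\mathbf x+\mathbf B\mathbf y(\mathbf h)\ge \mathbf h}\ \mathbf d^T\mathbf y(\mathbf h).$$ The affine policy problem $z_{\sf Aff}(\mathbf B)$ is the same problem with the second-stage decision restricted to $\mathbf y(\mathbf h)=\mathbf P\mathbf h+\mathbf q$ for some $\mathbf P\in\mathbb R^{n\times m}$, $\mathbf q\in\mathbb R^n$: it is the minimum over $\mathbf x\in\mathbb R^n_+,\mathbf P,\mathbf q$ of $\mathbf c^T\mathbf x+\max_{\mathbf h\in\mathcal U}\mathbf d^T(\mathbf P\mathbf h+\mathbf q)$ subject to $\mathbf A\mathbf x+\mathbf B(\mathbf P\mathbf h+\mathbf q)\ge\mathbf h$ and $\mathbf P\mathbf h+\mathbf q\ge\mathbf 0$ for all $\mathbf h\in\mathcal U$. $\mathbf e$ is the all-ones vector and $\mathbf e_i$ the $i$-th standard basis vector of $\mathbb R^m$. *)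

From HB Require Import structures.
From mathcomp Require Import all_boot all_order all_algebra.
From mathcomp Require Import all_classical all_reals ereal.
Set Implicit Arguments. Unset Strict Implicit. Unset Printing Implicit Defensive.
Import Order.TTheory GRing.Theory Num.Theory.
Local Open Scope classical_set_scope.
Local Open Scope ring_scope.

Section Defs.
Variable R : realType.

Definition dotv n (u v : 'cV[R]_n) : R := \sum_(i < n) u i 0 * v i 0.

Definition vge n (u v : 'cV[R]_n) : Prop := forall i, v i 0 <= u i 0.
Definition nonneg n (u : 'cV[R]_n) : Prop := vge u 0.

Definition conv_hull m (S : set 'cV[R]_m) : set 'cV[R]_m :=
  [set x | exists (k : nat) (lam : 'I_k -> R) (p : 'I_k -> 'cV[R]_m),
      (forall i, S (p i)) /\ (forall i, 0 <= lam i) /\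
      \sum_(i < k) lam i = 1 /\ x = \sum_(i < k) lam i *: p i].

Definition second_stage m n (A B : 'M[R]_(m, n)) (d x : 'cV[R]_n) (h : 'cV[R]_m)
  : \bar R :=
  ereal_inf [set (dotv d y)%:E | y in
     [set y : 'cV[R]_n | nonneg y /\ vge (A *m x + B *m y) h]].

Definition z_AR m n (A B : 'M[R]_(m, n)) (c d : 'cV[R]_n) (U : set 'cV[R]_m)
  : \bar R :=
  ereal_inf [set ((dotv c x)%:E + ereal_sup [set second_stage A B d x h | h in U])%E
             | x in [set x : 'cV[R]_n | nonneg x]].

Definition z_Aff m n (A B : 'M[R]_(m, n)) (c d : 'cV[R]_n) (U : set 'cV[R]_m)
  : \bar R :=
  ereal_inf [set ((dotv c xPq.1.1)%:E +
                  ereal_sup [set (dotv d (xPq.1.2 *m h + xPq.2))%:E | h in U])%E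
     | xPq in [set xPq : 'cV[R]_n * 'M[R]_(n, m) * 'cV[R]_n |
                 nonneg xPq.1.1 /\
                 (forall h, U h ->
                    vge (A *m xPq.1.1 + B *m (xPq.1.2 *m h + xPq.2)) h /\
                    nonneg (xPq.1.2 *m h + xPq.2))]].

Definition e_vec m : 'cV[R]_m := const_mx 1.
Definition e_basis m (i : 'I_m) : 'cV[R]_m := delta_mx i 0.
Definition nu_vec m (i : 'I_m) : 'cV[R]_m :=
  (Num.sqrt (m%:R : R))^-1 *: (e_vec m - e_basis i).
Definition B_inst m : 'M[R]_m :=
  \matrix_(i, j) (if i == j then 1 else (Num.sqrt (m%:R : R))^-1).
Definition U_inst m : set 'cV[R]_m :=
  conv_hull ([set 0] `|` range (@e_basis m) `|` range (@nu_vec m)).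

End Defs.

From HB Require Import structures.
From mathcomp Require Import all_boot all_order all_algebra.
From mathcomp Require Import all_classical all_reals ereal.
From mathcomp Require Import ring lra.
Import Order.TTheory GRing.Theory Num.Theory.
Local Open Scope classical_set_scope.
Local Open Scope ring_scope.
Set Implicit Arguments. Unset Strict Implicit. Unset Printing Implicit Defensive.

(* Upper bound: each vertex 0, e_i, nu_i of U is covered at cost at most 1 by the
   recourse 0 or e_i (column i of B dominates both e_i and nu_i), and covering at
   bounded cost survives convex combinations, so z_AR <= 1.
   Lower bound: an affine policy P h + q must have q >= 0 (at h = 0),
   (B (P e_i + q))_i >= 1 (at e_i) and (P nu_i + q)_i >= 0 (at nu_i).  Summing over i
   and eliminating the trace of P gives sum_ij P_ij >= m - 2 sqrt m e^T q, so the
   costs at 0 and at the barycentre of the nu_i add up to at least (m - 1) / sqrt m;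
   one of them is at least sqrt m / 4 as soon as m >= 2. *)

Lemma addmxE (V : nmodType) m n (A B : 'M[V]_(m, n)) i j :
  (A + B) i j = A i j + B i j.
Proof. exact: mxE. Qed.

Section TwoStageBounds.
Variables (R : realType) (m n : nat).
Implicit Types (S U : set 'cV[R]_m) (h w : 'cV[R]_m) (d y : 'cV[R]_n).

Lemma sub_conv_hull S : S `<=` conv_hull S.
Proof.
move=> p Sp; exists 1%N, (fun=> 1), (fun=> p).
by rewrite !big_ord1 scale1r.
Qed.

Lemma dotv_sumZr d k (lam : 'I_k -> R) (y : 'I_k -> 'cV[R]_n) :
  dotv d (\sum_(i < k) lam i *: y i) = \sum_(i < k) lam i * dotv d (y i).
Proof.
rewrite /dotv; under eq_bigr do rewrite summxE mulr_sumr.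
rewrite exchange_big; apply: eq_bigr => i _; rewrite mulr_sumr.
by apply: eq_bigr => j _; rewrite mxE mulrCA.
Qed.

Lemma dot0v d : dotv 0 d = 0.
Proof. by rewrite /dotv big1 // => i _; rewrite mxE mul0r. Qed.

Lemma conv_hull_covered (B : 'M[R]_(m, n)) d w (t : R) S :
  (forall p, S p -> exists y, nonneg y /\ vge (w + B *m y) p /\ dotv d y <= t) ->
  forall h, conv_hull S h ->
    exists y, nonneg y /\ vge (w + B *m y) h /\ dotv d y <= t.
Proof.
move=> cover _ [k [lam [p [Sp [lam0 [lam1 ->]]]]]].
have [y /(_ _)/= yP] := boolp.choice (fun i => cover _ (Sp i)).
exists (\sum_(i < k) lam i *: y i); split; [|split].
- move=> j; rewrite summxE mxE; apply: sumr_ge0 => i _; rewrite mxE.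
  by apply: mulr_ge0 => //; have [/(_ j) + _] := yP i; rewrite mxE.
- have -> : w + B *m (\sum_(i < k) lam i *: y i) =
            \sum_(i < k) lam i *: (w + B *m y i).
    under [RHS]eq_bigr do rewrite scalerDr.
    rewrite big_split /= -scaler_suml lam1 scale1r mulmx_sumr.
    by congr (_ + _); apply: eq_bigr => i _; rewrite scalemxAr.
  move=> j; rewrite !summxE; apply: ler_sum => i _.
  have [_ [/(_ j) yi _]] := yP i.
  by rewrite mxE [leRHS]mxE; apply: ler_wpM2l.
- rewrite dotv_sumZr -[t]mul1r -lam1 mulr_suml; apply: ler_sum => i _.
  by apply: ler_wpM2l => //; have [_ [_ +]] := yP i.
Qed.

Lemma second_stage_le (A B : 'M[R]_(m, n)) d x h y :
  nonneg y -> vge (A *m x + B *m y) h -> (second_stage A B d x h <= (dotv d y)%:E)%E.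
Proof. by move=> y0 yh; apply: ge_ereal_inf; exists (dotv d y)%:E => //; exists y. Qed.

Lemma z_AR_le (A B : 'M[R]_(m, n)) c d U x (t : R) :
  nonneg x ->
  (forall h, U h -> exists y, nonneg y /\ vge (A *m x + B *m y) h /\ dotv d y <= t) ->
  (z_AR A B c d U <= (dotv c x + t)%:E)%E.
Proof.
move=> x0 cover; apply: ge_ereal_inf; eexists; first by exists x.
rewrite EFinD; apply: leeD2l; apply: ge_ereal_sup => _ [h Uh <-].
have [y [y0 [yh yt]]] := cover h Uh.
by apply: le_trans (second_stage_le d y0 yh) _; rewrite lee_fin.
Qed.

Lemma z_Aff_ge (A B : 'M[R]_(m, n)) c d U (t : R) :
  (forall x P q, nonneg x ->
     (forall h, U h -> vge (A *m x + B *m (P *m h + q)) h /\ nonneg (P *m h + q)) ->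
     exists2 h, U h & t <= dotv c x + dotv d (P *m h + q)) ->
  (t%:E <= z_Aff A B c d U)%E.
Proof.
move=> good; apply: le_ereal_inf_tmp => _ [[[x P] q] /= [x0 feas] <-].
have [h Uh ht] := good x P q x0 feas.
apply: le_trans (_ : (dotv c x)%:E + (dotv d (P *m h + q))%:E <= _)%E.
  by rewrite -EFinD lee_fin.
apply: leeD2l; apply: le_ereal_sup_tmp.
by exists (dotv d (P *m h + q))%:E => //; exists h.
Qed.

End TwoStageBounds.

Section Instance.
Variables (R : realType) (m : nat).
Local Notation s := (Num.sqrt (m%:R : R)).
Local Notation B := (@B_inst R m).
Local Notation e := (@e_vec R m).
Local Notation U := (@U_inst R m).

Lemma invsqrt_ge0 : 0 <= s^-1.
Proof. by rewrite invr_ge0 sqrtr_ge0. Qed.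

Lemma dotv_e_vec (v : 'cV[R]_m) : dotv e v = \sum_k v k 0.
Proof. by apply: eq_bigr => k _; rewrite mxE mul1r. Qed.

Lemma nu_vec_entry i k : @nu_vec R m i k 0 = s^-1 * (1 - (k == i)%:R).
Proof. by rewrite !mxE eqxx andbT. Qed.

Lemma mulmx_e_basis p (P : 'M[R]_(p, m)) i k : (P *m @e_basis R m i) k 0 = P k i.
Proof. by rewrite -colE mxE. Qed.

Lemma B_inst_mulmx_entry (v : 'cV[R]_m) i :
  (B *m v) i 0 = v i 0 + s^-1 * (\sum_k v k 0 - v i 0).
Proof.
rewrite mxE (bigD1 i) //= mxE eqxx mul1r; congr (_ + _).
rewrite [in RHS](bigD1 i) //= addrAC subrr add0r mulr_sumr.
by apply: eq_bigr => k /negbTE kn; rewrite mxE eq_sym kn.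
Qed.

Lemma mulmx_nu_vec_diag (P : 'M[R]_m) i :
  (P *m @nu_vec R m i) i 0 = s^-1 * (\sum_j P i j - P i i).
Proof.
rewrite mxE [in RHS](bigD1 i) //= addrAC subrr add0r mulr_sumr (bigD1 i) //=.
rewrite nu_vec_entry eqxx subrr !mulr0 add0r; apply: eq_bigr => j /negbTE ji.
by rewrite nu_vec_entry ji subr0 mulr1 mulrC.
Qed.

Lemma sqrt_sqr : s * s = m%:R.
Proof. by rewrite -expr2 sqr_sqrtr. Qed.

Lemma B_inst_e_basis_entry i k :
  (B *m @e_basis R m i) k 0 = if k == i then 1 else s^-1.
Proof. by rewrite mulmx_e_basis mxE. Qed.

Lemma vertex_covered p :
  ([set 0] `|` range (@e_basis R m) `|` range (@nu_vec R m)) p ->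
  exists y, nonneg y /\ vge (0 + B *m y) p /\ dotv e y <= 1.
Proof.
have e_basis_cost i : dotv e (@e_basis R m i) = 1.
  rewrite dotv_e_vec (bigD1 i) //= mxE !eqxx big1 ?addr0 // => k /negbTE ki.
  by rewrite mxE ki.
have e_basis_ge0 i : nonneg (@e_basis R m i) by move=> k; rewrite !mxE ler0n.
have s0 := invsqrt_ge0.
move=> [[->|[i _ <-]]|[i _ <-]].
- exists 0; split; [|split] => [k|k|]; rewrite ?mulmx0 ?addr0 ?mxE //.
  by rewrite dotv_e_vec big1 // => k _; rewrite mxE.
- exists (@e_basis R m i); split; [|split; last by rewrite e_basis_cost] => // k.
  by rewrite add0r B_inst_e_basis_entry !mxE andbT; case: eqP.
- exists (@e_basis R m i); split; [|split; last by rewrite e_basis_cost] => // k.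
  rewrite add0r B_inst_e_basis_entry nu_vec_entry.
  by case: eqP; rewrite ?subrr ?mulr0 ?subr0 ?mulr1.
Qed.

Lemma z_AR_inst_le1 : (z_AR 0 B 0 e U <= 1%:E)%E.
Proof.
have x0 : nonneg (0 : 'cV[R]_m) by move=> k; rewrite mxE.
have := @z_AR_le R m m 0 B 0 e U 0 1 x0; rewrite dot0v add0r mul0mx; apply.
exact: conv_hull_covered vertex_covered.
Qed.

Definition nu_mean : 'cV[R]_m := \sum_(i < m) m%:R^-1 *: @nu_vec R m i.

Lemma nu_mean_entry k : nu_mean k 0 = (m%:R - 1) / (m%:R * s).
Proof.
rewrite summxE; under eq_bigr do rewrite mxE nu_vec_entry.
rewrite -!mulr_sumr sumrB sumr_const card_ord (bigD1 k) //= eqxx big1 ?addr0.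
  by rewrite invfM (_ : true%:R = 1 :> R) //; ring.
by move=> i; rewrite eq_sym => /negbTE ->.
Qed.

Hypothesis m_gt0 : (0 < m)%N.

Lemma sqrt_ge1 : 1 <= s.
Proof. by rewrite -[leLHS]sqrtr1 ler_sqrt // ler1n. Qed.

Lemma sqrt_neq0 : s != 0.
Proof. by rewrite gt_eqF // (lt_le_trans ltr01 sqrt_ge1). Qed.

Lemma nu_mean_in_U : U nu_mean.
Proof.
exists m, (fun=> m%:R^-1), (@nu_vec R m); split; first by move=> i; right; exists i.
split; first by move=> i; rewrite invr_ge0 ler0n.
by split => //; rewrite sumr_const card_ord -[_ *+ m]mulr_natr mulVf // pnatr_eq0 -lt0n.
Qed.

Section AffinePolicy.
Variables (P : 'M[R]_m) (q : 'cV[R]_m).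
Hypothesis feasible :
  forall h, U h -> vge (B *m (P *m h + q)) h /\ nonneg (P *m h + q).

Local Notation b := (\sum_k q k 0).
Local Notation trP := (\sum_i P i i).
Local Notation sumP := (\sum_i \sum_j P i j).

Lemma policy_q_ge0 k : 0 <= q k 0.
Proof.
have [_ /(_ k)] := feasible (sub_conv_hull (or_introl (or_introl erefl))).
by rewrite mulmx0 add0r mxE.
Qed.

Lemma policy_b_ge0 : 0 <= b.
Proof. by apply: sumr_ge0 => k _; apply: policy_q_ge0. Qed.

Lemma policy_e_basis i :
  1 <= P i i + q i 0 + s^-1 * (\sum_k P k i + b - (P i i + q i 0)).
Proof.
have Ue : U (@e_basis R m i) by apply: sub_conv_hull; left; right; exists i.
have [/(_ i) + _] := feasible Ue.
rewrite B_inst_mulmx_entry addmxE mulmx_e_basis mxE !eqxx.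
by under eq_bigr do rewrite addmxE mulmx_e_basis; rewrite big_split.
Qed.

Lemma policy_nu_vec i : 0 <= q i 0 + s^-1 * (\sum_j P i j - P i i).
Proof.
have Un : U (@nu_vec R m i) by apply: sub_conv_hull; right; exists i.
have [_ /(_ i)] := feasible Un.
by rewrite addmxE mulmx_nu_vec_diag mxE addrC.
Qed.

Lemma policy_sum_e_basis :
  m%:R <= trP + b + s^-1 * (sumP + b * m%:R - (trP + b)).
Proof.
have := ler_sum (index_enum 'I_m) (P := xpredT) (fun i _ => policy_e_basis i).
rewrite sumr_const card_ord big_split /= -mulr_sumr sumrB !big_split /= sumr_const.
by rewrite card_ord exchange_big /= mulr_natr.
Qed.

Lemma policy_sum_nu_vec : 0 <= b + s^-1 * (sumP - trP).
Proof.
have := ler_sum (index_enum 'I_m) (P := xpredT) (fun i _ => policy_nu_vec i).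
by rewrite big1 // big_split /= -mulr_sumr sumrB.
Qed.

Lemma policy_cost_0 : dotv e (P *m 0 + q) = b.
Proof. by rewrite mulmx0 add0r dotv_e_vec. Qed.

Lemma policy_cost_nu_mean :
  dotv e (P *m nu_mean + q) = b + (m%:R - 1) / (m%:R * s) * sumP.
Proof.
rewrite dotv_e_vec; under eq_bigr do rewrite addmxE mxE.
under eq_bigr do under eq_bigr do rewrite nu_mean_entry mulrC.
rewrite big_split /= addrC.
by under [in X in _ + X]eq_bigr do rewrite -mulr_sumr; rewrite -mulr_sumr.
Qed.

Lemma policy_trace_le : trP <= sumP + s * b.
Proof.
have := mulr_ge0 (le_trans ler01 sqrt_ge1) policy_sum_nu_vec.
by rewrite mulrDr mulrA mulfV ?sqrt_neq0 // mul1r; lra.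
Qed.

Lemma policy_total_ge : m%:R - 2 * s * b <= sumP.
Proof.
have s_u : s * s^-1 = 1 by rewrite mulfV ?sqrt_neq0.
have u_bM : s^-1 * (b * m%:R) = s * b.
  by rewrite -{2}sqrt_sqr mulrCA mulKf ?sqrt_neq0 // mulrC.
have ub_ge0 : 0 <= s^-1 * b by rewrite mulr_ge0 ?invsqrt_ge0 ?policy_b_ge0.
have u_le1 : 0 <= 1 - s^-1.
  by rewrite subr_ge0 invf_le1 ?sqrt_ge1 // (lt_le_trans ltr01 sqrt_ge1).
have trace_gap : 0 <= sumP + s * b - trP by rewrite subr_ge0 policy_trace_le.
have := mulr_ge0 u_le1 trace_gap.
have := policy_sum_e_basis.
(* multiplying the trace bound by 1 - 1/s eliminates the trace *)
have -> : trP + b + s^-1 * (sumP + b * m%:R - (trP + b)) =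
          trP + b + s^-1 * sumP + s^-1 * (b * m%:R) - s^-1 * trP - s^-1 * b by ring.
have -> : (1 - s^-1) * (sumP + s * b - trP) =
          sumP + s * b - trP - s^-1 * sumP - s * s^-1 * b + s^-1 * trP by ring.
rewrite u_bM s_u; lra.
Qed.

Lemma policy_two_costs :
  (m%:R - 1) / s <= dotv e (P *m 0 + q) + dotv e (P *m nu_mean + q).
Proof.
rewrite policy_cost_0 policy_cost_nu_mean.
have M_gt0 : 0 < m%:R :> R by rewrite ltr0n.
have c_ge0 : 0 <= (m%:R - 1) / (m%:R * s).
  by rewrite divr_ge0 ?subr_ge0 ?ler1n // mulr_ge0 ?ltW // (le_trans ler01 sqrt_ge1).
have := ler_wpM2l c_ge0 policy_total_ge.
have -> : (m%:R - 1) / (m%:R * s) * (m%:R - 2 * s * b) =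
          (m%:R - 1) / s - 2 * (b * ((m%:R - 1) / m%:R)).
  by field; rewrite sqrt_neq0 gt_eqF.
have : b * ((m%:R - 1) / m%:R) <= b * 1.
  by rewrite ler_wpM2l ?policy_b_ge0 // ler_pdivrMr // mul1r gerDl lerN10.
lra.
Qed.

End AffinePolicy.

Lemma z_Aff_inst_ge : (2 <= m)%N -> ((s / 4)%:E <= z_Aff 0 B 0 e U)%E.
Proof.
move=> m2; apply: z_Aff_ge => x P q _ feas.
have feasible h : U h -> vge (B *m (P *m h + q)) h /\ nonneg (P *m h + q).
  by move=> /feas; rewrite mul0mx add0r.
have two_costs := policy_two_costs feasible.
have quarter : s / 4 <= (m%:R - 1) / s / 2.
  have M2 : 2 <= m%:R :> R by rewrite ler_nat.
  have -> : (m%:R - 1) / s / 2 = s / 4 + (2 * (m%:R - 1) - s * s) / (4 * s).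
    by field; rewrite sqrt_neq0.
  rewrite sqrt_sqr lerDl divr_ge0 ?mulr_ge0 ?sqrtr_ge0 //; lra.
have [cost0|cost0] := lerP (s / 4) (dotv e (P *m 0 + q)).
- exists 0; first by apply: sub_conv_hull; left; left.
  by rewrite dot0v add0r.
- exists nu_mean; first exact: nu_mean_in_U.
  rewrite dot0v add0r; lra.
Qed.

End Instance.

Theorem lemma5 (R : realType) :
  exists (C : R) (m0 : nat), 0 < C /\
    forall m : nat, (0 < m)%N -> (m0 <= m)%N ->
      (((C * Num.sqrt (m%:R : R))%:E *
         z_AR (0 : 'M[R]_m) (@B_inst R m) 0 (@e_vec R m) (@U_inst R m))
       <= z_Aff (0 : 'M[R]_m) (@B_inst R m) 0 (@e_vec R m) (@U_inst R m))%E.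
Proof.
exists (1 / 4), 2%N; split=> [|m m_gt0 m2]; first lra.
apply: le_trans (z_Aff_inst_ge R m_gt0 m2).
rewrite mulrC mul1r -[leRHS]mule1; apply: lee_wpmul2l; last exact: z_AR_inst_le1.
by rewrite lee_fin divr_ge0 ?sqrtr_ge0.
Qed.
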